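(* For every constant $c>0$ there exist a finite password set $\mathcal{P}$ and a probability distribution $\mathcal{D}$ over rankings of $\mathcal{P}$ such that for every nonempty policy $\mathcal{A}\subseteq\mathcal{P}$ there exist a nonempty policy $\mathcal{A}'\subseteq\mathcal{P}$ and $k\in\mathbb{N}$ with $p(k,\mathcal{A})>c\cdot p(k,\mathcal{A}')$.
   Context: A ranking is a total order of $\mathcal{P}$. Ranking model: under policy $\mathcal{A}\subseteq\mathcal{P}$, $\Pr[w\mid\mathcal{A}]$ is the probability that a ranking drawn from $\mathcal{D}$ has $w$ as its most preferred password among those in $\mathcal{A}$. $p(k,\mathcal{A})$ is the maximum of $\sum_{w\in W}\Pr[w\mid\mathcal{A}]$ over $W\subseteq\mathcal{A}$ with $|W|\le k$ (the total probability of the $k$ most likely allowed passwords). Policies are arbitrary subsets of $\mathcal{P}$ (singleton rules setting). *)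

From HB Require Import structures.
From mathcomp Require Import all_boot all_order all_algebra all_fingroup.
From mathcomp Require Import reals.
Set Implicit Arguments. Unset Strict Implicit. Unset Printing Implicit Defensive.
Import Order.TTheory GRing.Theory Num.Theory.
Local Open Scope ring_scope.

(* Password set P = 'I_n.  A ranking is a permutation s : {perm 'I_n};
   s w is the position (rank) of password w, smaller = more preferred. *)

Definition is_dist (R : realType) (n : nat) (D : {ffun {perm 'I_n} -> R}) : Prop :=
  (forall s, 0 <= D s) /\ \sum_(s : {perm 'I_n}) D s = 1.

Definition best (n : nat) (s : {perm 'I_n}) (A : {set 'I_n}) (w : 'I_n) : bool :=
  (w \in A) && [forall v in A, (s w <= s v)%N].

Definition prA (R : realType) (n : nat) (D : {ffun {perm 'I_n} -> R})
    (A : {set 'I_n}) (w : 'I_n) : R :=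
  \sum_(s : {perm 'I_n} | best s A w) D s.

Definition pk (R : realType) (n : nat) (D : {ffun {perm 'I_n} -> R})
    (k : nat) (A : {set 'I_n}) : R :=
  \big[Num.max/0]_(W : {set 'I_n} | (W \subset A) && (#|W| <= k)%N)
     \sum_(w in W) prA D A w.

From HB Require Import structures.
From mathcomp Require Import all_boot all_order all_algebra all_fingroup.
From mathcomp Require Import reals.
From mathcomp Require Import zify lra.
Import Order.TTheory GRing.Theory Num.Theory.
Set Implicit Arguments. Unset Strict Implicit. Unset Printing Implicit Defensive.
Local Open Scope ring_scope.

(* Passwords 0..M are "low", M.+1..M+m "high".  A random ranking draws a low
   password a (a = 0 with probability 1/K, otherwise uniformly) and a high
   password M.+1 + b (uniformly), and prefers a first and M.+1 + b first among
   the high passwords.  If A contains a low password, its smallest one is A's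
   favourite whenever a = 0, so p(1, A) >= 1/K, while p(1, high) <= 1/m.  If A
   is all high, then p(|A|, A) = 1 while p(|A|, low) <= 1/K + |A|/M.  Taking
   m = K^2 and M = K^3 with K > 2c separates both cases by more than c. *)

Section RankByKey.
Variables (n : nat) (key : 'I_n -> nat).

Lemma card_keys_below_lt x : (#|[set v | (key v < key x)%N]| < n)%N.
Proof.
rewrite -[X in (_ < X)%N]card_ord -cardsT; apply: proper_card.
by apply/properP; split; [exact: subsetT | exists x; rewrite ?inE ?ltnn].
Qed.

Definition key_rank x : 'I_n := Ordinal (card_keys_below_lt x).

Lemma key_rank_mono x y : (key x < key y)%N -> (key_rank x < key_rank y)%N.
Proof.
move=> lt_xy; apply: proper_card; apply/properP; split.
  by apply/subsetP => v; rewrite !inE => /ltn_trans; apply.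
by exists x; rewrite !inE ?ltnn.
Qed.

Hypothesis key_inj : injective key.

Lemma key_rank_inj : injective key_rank.
Proof.
move=> x y eq_xy; case: (ltngtP (key x) (key y)) => [|| /key_inj //] /key_rank_mono;
  by rewrite eq_xy ltnn.
Qed.

Definition key_perm : {perm 'I_n} := perm key_rank_inj.

Lemma leq_key_perm w v : (key_perm w <= key_perm v)%N = (key w <= key v)%N.
Proof.
rewrite !permE; case: (ltngtP (key w) (key v)) => [lt_wv|lt_vw|/key_inj ->].
- by rewrite ltnW // key_rank_mono.
- by apply/negbTE; rewrite -ltnNge key_rank_mono.
- exact: leqnn.
Qed.

Lemma best_key_perm A w :
  best key_perm A w = (w \in A) && [forall v in A, (key w <= key v)%N].
Proof. by congr (_ && _); apply: eq_forallb => v; rewrite leq_key_perm. Qed.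

End RankByKey.

Lemma exists_best n (s : {perm 'I_n}) (A : {set 'I_n}) : A != set0 -> exists w, best s A w.
Proof.
case/set0Pn=> x0 x0A; have [w wA wmin] := arg_minnP (fun x => nat_of_ord (s x)) x0A.
by exists w; apply/andP; split=> //; apply/forall_inP.
Qed.

Section PasswordProbabilities.
Variables (R : realType) (n : nat) (D : {ffun {perm 'I_n} -> R}).

Lemma sum_prA_le_pk k (A W : {set 'I_n}) :
  W \subset A -> (#|W| <= k)%N -> \sum_(w in W) prA D A w <= pk D k A.
Proof.
move=> sWA leWk; apply: (@le_bigmax_cond _ _ _ _ W
  (fun W : {set 'I_n} => (W \subset A) && (#|W| <= k)%N)
  (fun W => \sum_(w in W) prA D A w)).
by rewrite sWA leWk.
Qed.

Lemma pk_le_of_prA_le k (A : {set 'I_n}) (w0 : 'I_n) (a b : R) :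
  0 <= a -> 0 <= b ->
  (forall w, w \in A -> prA D A w <= b + (if w == w0 then a else 0)) ->
  pk D k A <= a + k%:R * b.
Proof.
move=> a_ge0 b_ge0 prA_le; apply: bigmax_le => [|W /andP[sWA leWk]].
  by rewrite addr_ge0 ?mulr_ge0.
apply: (le_trans (y := \sum_(w in W) (b + (if w == w0 then a else 0)))).
  by apply: ler_sum => w wW; apply/prA_le/(subsetP sWA).
rewrite big_split /= sumr_const addrC -[b *+ _]mulr_natl; apply: lerD.
  rewrite (big_mkcond (mem W)) /=.
  apply: (le_trans (y := \sum_w (if w == w0 then a else 0))).
    by apply: ler_sum => w _; case: (w \in W); case: (w == w0).
  by rewrite -big_mkcond big_pred1_eq.
by rewrite ler_wpM2r // ler_nat.
Qed.

Lemma pk_card_ge1 (A : {set 'I_n}) : is_dist D -> A != set0 -> 1 <= pk D #|A| A.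
Proof.
move=> [D_ge0 D_sum1] A0; apply: le_trans (sum_prA_le_pk (subxx A) (leqnn _)).
rewrite /prA -D_sum1 (exchange_big_dep predT) //=; apply: ler_sum => s _.
have [w bw] := exists_best s A0; have wA : w \in A by case/andP: bw.
by rewrite (bigD1 w) ?wA //= lerDl sumr_ge0.
Qed.

End PasswordProbabilities.

Lemma ler_sum_subpred (R : numDomainType) (I : finType) (P Q : pred I) (F : I -> R) :
  (forall i, 0 <= F i) -> (forall i, P i -> Q i) ->
  \sum_(i | P i) F i <= \sum_(i | Q i) F i.
Proof.
move=> F_ge0 sPQ; rewrite [X in _ <= X](bigID P) /=.
rewrite (eq_bigl P) ?lerDl ?sumr_ge0 // => i.
by apply/andP/idP => [[] | Pi] //; split; first exact: sPQ.
Qed.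

Section Mixture.
Variables (R : realType) (n : nat) (I : finType).
Variables (sigma : I -> {perm 'I_n}) (weight : I -> R).

Definition mixture : {ffun {perm 'I_n} -> R} := [ffun s => \sum_(i | sigma i == s) weight i].

Lemma prA_mixture A w : prA mixture A w = \sum_(i | best (sigma i) A w) weight i.
Proof.
rewrite (partition_big sigma (fun s => best s A w)) => [|i //].
apply: eq_bigr => s bs; rewrite ffunE; apply: eq_bigl => i.
by case: eqP => [-> | _]; rewrite ?bs ?andbF.
Qed.

Hypothesis weight_ge0 : forall i, 0 <= weight i.

Lemma is_dist_mixture : \sum_i weight i = 1 -> is_dist mixture.
Proof.
move=> weight_sum1; split=> [s|]; first by rewrite ffunE sumr_ge0.
rewrite -weight_sum1 (partition_big sigma predT) //; apply: eq_bigr => s _.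
by rewrite ffunE.
Qed.

Lemma prA_mixture_le (P : pred I) A w :
  (forall i, best (sigma i) A w -> P i) -> prA mixture A w <= \sum_(i | P i) weight i.
Proof. by move=> bestP; rewrite prA_mixture ler_sum_subpred. Qed.

Lemma prA_mixture_ge (P : pred I) A w :
  (forall i, P i -> best (sigma i) A w) -> \sum_(i | P i) weight i <= prA mixture A w.
Proof. by move=> Pbest; rewrite prA_mixture ler_sum_subpred. Qed.

End Mixture.

Section Rankings.
Variables M m : nat.

Local Notation password := 'I_(M + m).+1.

(* Ranking (a, b) puts password a first and moves password M.+1 + b right
   behind M; all other passwords keep their natural order. *)
Definition ranking_key (a b x : nat) : nat :=
  if x == a then 0 else if x == (M.+1 + b)%N then (M.+1).*2 else x.*2.+1.

Lemma ranking_key_inj a b : (a <= M)%N -> injective (ranking_key a b).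
Proof.
move=> a_le x y; rewrite /ranking_key -!muln2.
by case: (x =P a); case: (x =P M.+1 + b)%N; case: (y =P a); case: (y =P M.+1 + b)%N; lia.
Qed.

Lemma ranking_key_ord_inj (r : 'I_M.+1 * 'I_m) :
  injective (fun x : password => ranking_key r.1 r.2 x).
Proof. by move=> x y /(ranking_key_inj (ltn_ord r.1))/val_inj. Qed.

Definition ranking r : {perm password} := key_perm (@ranking_key_ord_inj r).

Definition low : {set password} := [set x : password | (x <= M)%N].
Definition high : {set password} := ~: low.

Lemma card_high : #|high| = m.
Proof.
pose widen_low (i : 'I_M.+1) : password := widen_ord (leq_addr m M.+1) i.
have low_eq : low = widen_low @: 'I_M.+1.
  apply/setP => x; rewrite inE; apply/idP/imsetP => [x_le | [i _ ->]].
    by exists (Ordinal (x_le : (x < M.+1)%N)); last apply: val_inj.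
  by rewrite /= -ltnS.
have := cardsC low; rewrite /high low_eq card_imset ?card_ord.
  lia.
by move=> u v [] /val_inj.
Qed.

Lemma card_disjoint_low_le (A : {set password}) : [disjoint A & low] -> (#|A| <= m)%N.
Proof. by rewrite -(setCK low) -subsets_disjoint => /subset_leq_card; rewrite card_high. Qed.

Lemma best_ranking r (A : {set password}) w :
  best (ranking r) A w =
  (w \in A) && [forall v in A, (ranking_key r.1 r.2 w <= ranking_key r.1 r.2 v)%N].
Proof. exact: best_key_perm. Qed.

Lemma best_ranking_min b (A : {set password}) w :
  w \in A -> w \in low -> (forall v, v \in A -> (w <= v)%N) -> best (ranking (ord0, b)) A w.
Proof.
move=> wA; rewrite inE best_ranking wA => w_le wmin; apply/forall_inP => v vA.
move: (wmin v vA); rewrite /ranking_key /= -!muln2.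
by case: (nat_of_ord w =P 0)%N; case: (nat_of_ord w =P M.+1 + b)%N; case: (nat_of_ord v =P 0)%N;
  case: (nat_of_ord v =P M.+1 + b)%N; lia.
Qed.

Lemma best_ranking_high r y : best (ranking r) high y -> y = (M.+1 + r.2)%N :> nat.
Proof.
rewrite best_ranking !inE -ltnNge => /andP[y_high /forall_inP best_y].
have lt_b : (M.+1 + r.2 < (M + m).+1)%N by rewrite addSn ltnS ltn_add2l.
have := best_y (Ordinal lt_b); rewrite !inE /= -ltnNge ltnS leq_addr => /(_ isT).
have := ltn_ord r.1; rewrite /ranking_key /= eqxx -!muln2.
by case: (nat_of_ord y =P r.1); case: (nat_of_ord y =P M.+1 + r.2)%N;
  case: (M.+1 + r.2 =P r.1)%N; lia.
Qed.

Lemma best_ranking_low r t : best (ranking r) low t -> t = r.1 :> nat.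
Proof.
rewrite best_ranking inE => /andP[t_low /forall_inP best_t].
have lt_a : (r.1 < (M + m).+1)%N by rewrite ltnS (leq_trans _ (leq_addr m M)) // -ltnS.
have := best_t (Ordinal lt_a); rewrite !inE /= -ltnS ltn_ord => /(_ isT).
have := ltn_ord r.1; rewrite /ranking_key /= eqxx -!muln2.
by case: (nat_of_ord t =P r.1); case: (nat_of_ord t =P M.+1 + r.2)%N; lia.
Qed.

End Rankings.

Section RankingDistribution.
Variables (R : realType) (K M m : nat).
Hypotheses (K_gt0 : (0 < K)%N) (M_gt0 : (0 < M)%N) (m_gt0 : (0 < m)%N).

Local Notation password := 'I_(M + m).+1.

Definition head_weight (a : 'I_M.+1) : R :=
  if a == ord0 then K%:R^-1 else (1 - K%:R^-1) / M%:R.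

Definition ranking_weight (r : 'I_M.+1 * 'I_m) : R := head_weight r.1 / m%:R.

Definition ranking_dist := mixture (@ranking M m) ranking_weight.

Lemma head_weight_ge0 a : 0 <= head_weight a.
Proof.
rewrite /head_weight; case: ifP => _; first by rewrite invr_ge0 ler0n.
by rewrite divr_ge0 ?ler0n // subr_ge0 invf_le1 ?ltr0n // ler1n.
Qed.

Lemma head_weight_le a : head_weight a <= M%:R^-1 + (if a == ord0 then K%:R^-1 else 0).
Proof.
rewrite /head_weight; case: ifP => _; first by rewrite lerDr invr_ge0 ler0n.
by rewrite addr0 -[leRHS]mul1r ler_pM2r ?invr_gt0 ?ltr0n // gerBl invr_ge0 ler0n.
Qed.

Lemma sum_head_weight : \sum_a head_weight a = 1.
Proof.
rewrite big_ord_recl /head_weight eqxx.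
rewrite (eq_bigr (fun _ => (1 - K%:R^-1) / M%:R)) //.
rewrite sumr_const card_ord -[_ *+ M]mulr_natl mulrC divfK ?pnatr_eq0 -?lt0n //.
by rewrite addrC subrK.
Qed.

Lemma sum_ranking_weight (P : pred 'I_M.+1) (Q : pred 'I_m) :
  \sum_(r | P r.1 && Q r.2) ranking_weight r =
  (\sum_(a | P a) head_weight a) * (#|Q|%:R / m%:R).
Proof.
rewrite -(pair_big_dep P (fun _ => Q) (fun a _ => head_weight a / m%:R)) mulr_suml.
by apply: eq_bigr => a _; rewrite sumr_const -[_ *+ _]mulr_natl mulrCA mulrA.
Qed.

Lemma ranking_weight_ge0 r : 0 <= ranking_weight r.
Proof. by rewrite divr_ge0 ?head_weight_ge0 ?ler0n. Qed.

Lemma is_dist_ranking_dist : is_dist ranking_dist.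
Proof.
apply: is_dist_mixture; first exact: ranking_weight_ge0.
rewrite (eq_bigl (fun r => predT r.1 && predT r.2)) // sum_ranking_weight.
by rewrite sum_head_weight card_ord mul1r divff ?pnatr_eq0 -?lt0n.
Qed.

Lemma prA_min_low_ge (A : {set password}) w :
  w \in A -> w \in low M m -> (forall v, v \in A -> (w <= v)%N) ->
  K%:R^-1 <= prA ranking_dist A w.
Proof.
move=> wA w_low wmin.
apply: le_trans (prA_mixture_ge (P := fun r => pred1 ord0 r.1 && predT r.2)
  ranking_weight_ge0 _); last first.
  by move=> [a b] /andP[/= /eqP -> _]; apply: best_ranking_min.
rewrite sum_ranking_weight big_pred1_eq /head_weight eqxx card_ord.
by rewrite divff ?mulr1 ?pnatr_eq0 -?lt0n.
Qed.

Lemma prA_high_le y : y \in high M m -> prA ranking_dist (high M m) y <= m%:R^-1.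
Proof.
rewrite !inE -ltnNge => y_high.
have lt_b : (y - M.+1 < m)%N by have := ltn_ord y; lia.
apply: le_trans (prA_mixture_le (P := fun r => predT r.1 && pred1 (Ordinal lt_b) r.2)
  ranking_weight_ge0 _) _.
  by move=> r /best_ranking_high y_eq; apply/eqP/val_inj => /=; lia.
by rewrite (sum_ranking_weight predT) sum_head_weight card1 mul1r div1r.
Qed.

Lemma prA_low_le t :
  t \in low M m ->
  prA ranking_dist (low M m) t <= M%:R^-1 + (if t == ord0 then K%:R^-1 else 0).
Proof.
rewrite inE => t_low; pose a := Ordinal (t_low : (t < M.+1)%N).
apply: le_trans (prA_mixture_le (P := fun r => pred1 a r.1 && predT r.2)
  ranking_weight_ge0 _) _.
  by move=> r /best_ranking_low t_eq; apply/andP; split=> //; apply/eqP/val_inj.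
rewrite sum_ranking_weight big_pred1_eq card_ord divff ?mulr1 ?pnatr_eq0 -?lt0n //.
exact: head_weight_le.
Qed.

Lemma pk_high_le : pk ranking_dist 1 (high M m) <= m%:R^-1.
Proof.
rewrite -[leRHS]add0r -[X in _ <= _ + X]mul1r.
apply: (pk_le_of_prA_le 1 (w0 := ord0)) => // [|w /prA_high_le]; first by rewrite invr_ge0 ler0n.
by rewrite if_same addr0.
Qed.

Lemma pk_low_le k : (k <= m)%N -> pk ranking_dist k (low M m) <= K%:R^-1 + m%:R / M%:R.
Proof.
move=> le_km; apply: (le_trans (pk_le_of_prA_le k (w0 := ord0) _ _ (@prA_low_le))).
- by rewrite invr_ge0 ler0n.
- by rewrite invr_ge0 ler0n.
by rewrite lerD2l ler_wpM2r ?invr_ge0 ?ler0n ?ler_nat.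
Qed.

Lemma pk_meets_low_ge (A : {set password}) :
  ~~ [disjoint A & low M m] -> K%:R^-1 <= pk ranking_dist 1 A.
Proof.
rewrite -setI_eq0 => /set0Pn[x]; rewrite inE => /andP[xA x_low].
have [w wA wmin] := arg_minnP (fun v : password => nat_of_ord v) xA.
have w_low : w \in low M m by move: x_low; rewrite !inE; apply/leq_trans/wmin.
apply: le_trans (sum_prA_le_pk _ (W := [set w]) _ _); last by rewrite cards1.
  by rewrite big_set1 prA_min_low_ge.
by rewrite sub1set.
Qed.

End RankingDistribution.

Theorem theoremB1 (R : realType) (c : R) :
  0 < c ->
  exists (n : nat) (D : {ffun {perm 'I_n} -> R}),
    (0 < n)%N /\ is_dist D /\
    forall A : {set 'I_n}, A != set0 ->
      exists A' : {set 'I_n}, A' != set0 /\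
        exists k : nat, c * pk D k A' < pk D k A.
Proof.
move=> c_gt0; pose K := (Num.Def.archi_bound (2 * c)).+1.
have K_gt0 : (0 < K)%N by [].
have cK : c * K%:R^-1 < 2^-1.
  have lt_K : (Num.Def.archi_bound (2 * c))%:R < K%:R :> R by rewrite ltr_nat.
  have := archi_boundP (ltW (mulr_gt0 (ltr0n R 2) c_gt0)).
  by rewrite ltr_pdivrMr ?ltr0n //; lra.
pose m := (K * K)%N; pose M := (K * m)%N.
have [m_gt0 M_gt0] : (0 < m)%N /\ (0 < M)%N by rewrite !muln_gt0 K_gt0.
have Kinv_gt0 : 0 < K%:R^-1 :> R by rewrite invr_gt0 ltr0n.
have D_dist := is_dist_ranking_dist R K_gt0 M_gt0 m_gt0.
exists (M + m).+1, (ranking_dist R K M m); split=> //; split=> // A A0.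
have [A_low | A_high] := boolP (~~ [disjoint A & low M m]).
- exists (high M m); split; first by rewrite -cards_eq0 card_high -lt0n.
  exists 1%N; apply: le_lt_trans (ler_wpM2l (ltW c_gt0) (pk_high_le R K_gt0 M_gt0 m_gt0)) _.
  apply: lt_le_trans (pk_meets_low_ge R K_gt0 m_gt0 A_low).
  by rewrite /m natrM invfM mulrA gtr_pMl //; lra.
- exists (low M m); split; first by apply/set0Pn; exists ord0; rewrite inE.
  have le_Am : (#|A| <= m)%N by apply/card_disjoint_low_le/negPn.
  exists #|A|; apply: le_lt_trans (ler_wpM2l (ltW c_gt0) (pk_low_le R K_gt0 M_gt0 m_gt0 le_Am)) _.
  apply: lt_le_trans (pk_card_ge1 D_dist A0).
  by rewrite /M natrM invfM mulrCA divff ?mulr1 ?pnatr_eq0 -?lt0n //; lra.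
Qed.
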